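(* Let $K$ be a simplicial complex on the vertex set $[m]$ and let $I\subseteq[m]$. Then the fixed point set $(\mathcal{Z}_K)^{T^I}$ is empty if $I\notin K$, and if $I\in K$ it is $\mathbb{Z}_2$-equivariantly homeomorphic to $\mathcal{Z}_{\operatorname{lk}_K(I)}$, where both carry the complex conjugation $\mathbb{Z}_2$-action.
   Context: The moment-angle complex is $\mathcal{Z}_K=\bigcup_{\sigma\in K}\{(z_1,\ldots,z_m)\in(D^2)^m: |z_i|=1\text{ for } i\notin\sigma\}$, where $D^2$ is the closed unit disc in $\mathbb{C}$. The torus $T^m=(S^1)^m$ acts by coordinatewise multiplication and $T^I=\{t\in T^m: t_i=1 \text{ for } i\notin I\}$ acts by restriction; $\mathbb{Z}_2$ acts by coordinatewise complex conjugation. The link of a face $\sigma$ is $\operatorname{lk}_K(\sigma)=\{\tau\in K:\tau\cap\sigma=\varnothing,\ \tau\cup\sigma\in K\}$, regarded as a simplicial complex on the vertex set $[m]\setminus\sigma$, and $\mathcal{Z}_{\operatorname{lk}_K(I)}\subseteq(D^2)^{[m]\setminus I}$ is formed with respect to that vertex set. *)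

From HB Require Import structures.
From mathcomp Require Import all_boot all_order all_algebra.
From mathcomp Require Import all_classical all_reals all_analysis.
Set Implicit Arguments. Unset Strict Implicit. Unset Printing Implicit Defensive.
Import Order.TTheory GRing.Theory Num.Theory.
Import numFieldNormedType.Exports.
Local Open Scope classical_set_scope.
Local Open Scope ring_scope.

(* Complex numbers modelled as pairs (Re, Im) of reals, with the product
   topology of R * R (= the usual topology of C). *)
Notation cpx R := (R * R)%type.

Definition cmul (R : realType) (z w : cpx R) : cpx R :=
  (z.1 * w.1 - z.2 * w.2, z.1 * w.2 + z.2 * w.1).
Definition cconj (R : realType) (z : cpx R) : cpx R := (z.1, - z.2).
Definition cone (R : realType) : cpx R := (1, 0).
Definition cnorm2 (R : realType) (z : cpx R) : R := z.1 ^+ 2 + z.2 ^+ 2.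

Definition disc (R : realType) : set (cpx R) := [set z | cnorm2 z <= 1].
Definition circle (R : realType) : set (cpx R) := [set z | cnorm2 z = 1].

Notation pts R V := {ptws V -> (R * R)%type}.

(* simplicial complex on the vertex set V (ghost vertices allowed) *)
Definition is_simplicial_complex (V : finType) (K : {set {set V}}) : Prop :=
  finset.set0 \in K /\ (forall s t : {set V}, s \in K -> t \subset s -> t \in K).

Definition moment_angle (R : realType) (V : finType) (K : {set {set V}})
  : set (pts R V) :=
  [set z | exists2 s, s \in K &
     (forall i, disc (z i)) /\ (forall i, i \notin s -> circle (z i))].

Definition subtorus (R : realType) (V : finType) (I : {set V}) : set (pts R V) :=
  [set t | (forall i, circle (t i)) /\ (forall i, i \notin I -> t i = cone R)].

Definition tact (R : realType) (V : finType) (t z : pts R V) : pts R V :=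
  fun i => cmul (t i) (z i).

Definition conjact (R : realType) (V : finType) (z : pts R V) : pts R V :=
  fun i => cconj (z i).

Definition torus_fixed (R : realType) (V : finType) (K : {set {set V}}) (I : {set V})
  : set (pts R V) :=
  [set z | moment_angle K z /\ (forall t, @subtorus R V I t -> tact t z = z)].

Definition compl_vert (V : finType) (I : {set V}) := {i : V | i \notin I}.

(* link of I in K, as a complex on the vertex set V \ I *)
Definition link (V : finType) (K : {set {set V}}) (I : {set V})
  : {set {set compl_vert I}} :=
  [set t : {set compl_vert I} | (val @: t) :|: I \in K].

Definition Z2_homeomorphic (R : realType) (V W : finType)
  (A : set (pts R V)) (B : set (pts R W)) : Prop :=
  exists (f : pts R V -> pts R W) (g : pts R W -> pts R V),
    (forall x, A x -> B (f x)) /\ (forall y, B y -> A (g y)) /\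
    (forall x, A x -> g (f x) = x) /\ (forall y, B y -> f (g y) = y) /\
    {within A, continuous f} /\ {within B, continuous g} /\
    (forall x, A x -> f (conjact x) = conjact (f x)).

Arguments moment_angle R {V} K.
Arguments torus_fixed R {V} K I.

(* A point z of Z_K is fixed by T^I exactly when z_i = 0 for every i in I:
   the element of T^I that is -1 at i and 1 elsewhere already forces this.
   A zero coordinate cannot lie on the circle, so the face s carrying z
   contains I; hence the fixed set is empty unless I is a face.  When I is a
   face, forgetting the (zero) coordinates in I and extending by zero are
   mutually inverse continuous maps between (Z_K)^{T^I} and Z_{lk_K(I)}: a face
   t of the link corresponds to the face t + I of K.  Both maps act
   coordinatewise, so they commute with complex conjugation. *)

From HB Require Import structures.
From mathcomp Require Import all_boot all_order all_algebra.
From mathcomp Require Import all_classical all_reals all_analysis.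
From mathcomp Require Import lra.
Set Implicit Arguments. Unset Strict Implicit.
Import Order.TTheory GRing.Theory Num.Theory.
Import numFieldNormedType.Exports.
Local Open Scope classical_set_scope.
Local Open Scope ring_scope.

Lemma continuous_ptws (T : topologicalType) (U : Type) (V : topologicalType)
    (h : T -> {ptws U -> V}) :
  (forall i, continuous (fun x => h x i)) -> continuous h.
Proof.
move=> hc x; apply/cvg_sup => i A /= [_ [[B oB <-] Bhxi BA]].
exact: filterS BA (hc i x B (open_nbhs_nbhs (conj oB Bhxi))).
Qed.

Section ComplexCoordinates.
Variable R : realType.

Lemma circle_cone : circle (cone R).
Proof. by rewrite /circle /cnorm2 /= expr1n expr0n addr0. Qed.

Lemma circleN1 : circle ((-1, 0) : cpx R).
Proof. by rewrite /circle /cnorm2 /= sqrrN expr1n expr0n addr0. Qed.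

Lemma circle0 : ~ circle ((0, 0) : cpx R).
Proof. by rewrite /circle /cnorm2 /= expr0n addr0 => /esym/eqP; rewrite oner_eq0. Qed.

Lemma disc0 : disc ((0, 0) : cpx R).
Proof. by rewrite /disc /cnorm2 /= expr0n addr0 ler01. Qed.

Lemma cmul1l (w : cpx R) : cmul (cone R) w = w.
Proof. by case: w => a b; rewrite /cmul /= !mul1r !mul0r subr0 addr0. Qed.

Lemma cmulr0 (t : cpx R) : cmul t (0, 0) = (0, 0).
Proof. by rewrite /cmul /= !mulr0 subr0 addr0. Qed.

Lemma cmulN1_fixed (w : cpx R) : cmul (-1, 0) w = w -> w = (0, 0).
Proof.
case: w => a b; rewrite /cmul /= => -[ha hb].
by congr pair; lra.
Qed.

End ComplexCoordinates.

Section FixedPoints.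
Variables (R : realType) (V : finType) (K : {set {set V}}) (I : {set V}).
Hypothesis K_down : forall s t : {set V}, s \in K -> t \subset s -> t \in K.

Lemma subtorus_fixedP (z : pts R V) :
  (forall t, @subtorus R V I t -> tact t z = z) <-> {in I, forall i, z i = (0, 0)}.
Proof.
split=> [zfix i iI | z0 t [_ t1]].
  pose t : pts R V := fun k => if k == i then (-1, 0) else cone R.
  apply: cmulN1_fixed; have /(congr1 (fun y => y i)) : tact t z = z.
    apply: zfix; split=> k; rewrite /t.
      by case: eqP => _; [exact: circleN1 | exact: circle_cone].
    by case: eqP => // -> /negP.
  by rewrite /tact /t eqxx.
apply/funext => i; rewrite /tact.
by have [/z0 ->|/t1 ->] := boolP (i \in I); [exact: cmulr0 | exact: cmul1l].
Qed.

Lemma torus_fixed_face (z : pts R V) : torus_fixed R K I z ->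
  exists2 s, s \in K &
    [/\ I \subset s, forall i, disc (z i) & forall i, i \notin s -> circle (z i)].
Proof.
move=> [[s sK [zd zc]] /subtorus_fixedP z0]; exists s => //; split => //.
apply/fintype.subsetP => i iI; apply/negPn/negP => /zc.
by rewrite z0 //; exact: circle0.
Qed.

Lemma mem_face_of_torus_fixed (z : pts R V) : torus_fixed R K I z -> I \in K.
Proof. by case/torus_fixed_face => s sK [Is _ _]; exact: K_down Is. Qed.

Definition restrict_compl (z : pts R V) : pts R (compl_vert I) :=
  fun j => z (val j).

Definition extend_zero (w : pts R (compl_vert I)) : pts R V :=
  fun i => if insub i is Some j then w j else (0, 0).

Lemma restrict_complK : cancel extend_zero restrict_compl.
Proof. by move=> w; apply/funext => j; rewrite /restrict_compl /extend_zero valK. Qed.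

Lemma extend_zeroK (z : pts R V) : torus_fixed R K I z ->
  extend_zero (restrict_compl z) = z.
Proof.
move=> [_ /subtorus_fixedP z0]; apply/funext => i; rewrite /extend_zero.
by case: insubP => [j _ <- // | /negPn /z0 ->].
Qed.

Lemma restrict_compl_fixed (z : pts R V) : torus_fixed R K I z ->
  moment_angle R (link K I) (restrict_compl z).
Proof.
case/torus_fixed_face => s sK [Is zd zc].
exists [set j : compl_vert I | val j \in s]%SET.
  rewrite /link inE; apply: K_down sK _; rewrite finset.subUset Is andbT.
  by apply/fintype.subsetP => i /imsetP [j + ->]; rewrite inE.
by split=> j; [exact: zd | rewrite inE => /zc].
Qed.

Lemma extend_zero_fixed (w : pts R (compl_vert I)) :
  moment_angle R (link K I) w -> torus_fixed R K I (extend_zero w).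
Proof.
case=> t; rewrite /link inE => tK [wd wc]; split.
  exists ((val @: t) :|: I) => //; split=> i; rewrite /extend_zero.
    by case: insubP => [j _ _ | _]; [exact: wd | exact: disc0].
  rewrite finset.in_setU negb_or => /andP [it iI].
  case: insubP => [j _ ij | ]; last by rewrite iI.
  by apply: wc; apply: contra it => jt; rewrite -ij imset_f.
apply/subtorus_fixedP => i iI; rewrite /extend_zero.
by case: insubP => // j; rewrite iI.
Qed.

Lemma restrict_compl_conj (z : pts R V) :
  restrict_compl (conjact z) = conjact (restrict_compl z).
Proof. by []. Qed.

Lemma restrict_compl_continuous : continuous restrict_compl.
Proof. by apply: continuous_ptws => j; exact: proj_continuous. Qed.

Lemma extend_zero_continuous : continuous extend_zero.
Proof.
apply: continuous_ptws => i; rewrite /extend_zero.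
by case: insub => [j|]; [exact: proj_continuous | exact: cst_continuous].
Qed.

End FixedPoints.

Theorem lemma3p5 (R : realType) (m : nat) (K : {set {set 'I_m}}) (I : {set 'I_m}) :
  is_simplicial_complex K ->
  (I \notin K -> torus_fixed R K I = set0) /\
  (I \in K -> Z2_homeomorphic (torus_fixed R K I) (moment_angle R (link K I))).
Proof.
move=> [_ K_down]; split.
  move=> /negP IK; apply/seteqP; split => // z.
  by move/(mem_face_of_torus_fixed K_down).
move=> _; exists (@restrict_compl R _ I), (@extend_zero R _ I).
split; first exact: restrict_compl_fixed.
split; first exact: extend_zero_fixed.
split; first exact: extend_zeroK.
split; first by move=> w _; exact: restrict_complK.
split; first exact/continuous_subspaceT/restrict_compl_continuous.
split; first exact/continuous_subspaceT/extend_zero_continuous.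
by move=> z _; exact: restrict_compl_conj.
Qed.
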